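(* Let $\mathcal{P}=(|K|,V)$ be a polyhedral model. For all $x\in|K|$ and every SLCS$_\eta$ formula $\Phi$: $\mathcal{P},x\models\Phi$ (SLCS$_\eta$ semantics on polyhedral models) if and only if $\mathbb{F}(\mathcal{P}),\mathbb{F}(x)\models\mathcal{E}(\Phi)$ (SLCS$_\gamma$ semantics on poset models).
   Context: Fix a set PL of proposition letters. A simplex $\sigma\subseteq\mathbb{R}^m$ is the convex hull of $d+1$ affinely independent points $v_0,\dots,v_d$; its faces are the simplices spanned by nonempty subsets of its vertices. Its relative interior (cell) is $\tilde\sigma=\{\sum_i\lambda_iv_i:\lambda_i\in(0,1],\sum_i\lambda_i=1\}$. A simplicial complex $K$ is a finite set of simplices in $\mathbb{R}^m$ closed under faces, any two of which intersect in a common face or in $\emptyset$. Its set of cells $\tilde K=\{\tilde\sigma:\sigma\in K\}$ is partially ordered by $\tilde\sigma_1\preceq\tilde\sigma_2$ iff $\tilde\sigma_1$ is contained in the topological closure of $\tilde\sigma_2$ (equivalently, $\sigma_1$ is a face of $\sigma_2$). The polyhedron $|K|$ is the union of the simplices of $K$ with the subspace topology; its cells partition $|K|$. A polyhedral model is $\mathcal{P}=(|K|,V)$ with $V:\mathrm{PL}\to\mathcal{P}(|K|)$ such that each $V(p)$ is a union of cells. Its cell poset model is $\mathbb{F}(\mathcal{P})=(\tilde K,\preceq,\mathcal{V})$ with $\tilde\sigma\in\mathcal{V}(p)$ iff $\tilde\sigma\subseteq V(p)$; for $x\in|K|$, $\mathbb{F}(x)$ is the unique cell containing $x$. A topological path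 from $x$ is a continuous $\pi:[0,1]\to|K|$ with $\pi(0)=x$. In a poset $(W,\preceq)$ a $\pm$-path of length $\ell\ge2$ from $w$ is $\pi:\{0,\dots,\ell\}\to W$ with $\pi(0)=w$, consecutive elements comparable under $\preceq$, $\pi(0)\preceq\pi(1)$ and $\pi(\ell)\preceq\pi(\ell-1)$. Formulas: $\Phi::=p\mid\neg\Phi\mid\Phi_1\wedge\Phi_2\mid M(\Phi_1,\Phi_2)$, $M=\eta$ for SLCS$_\eta$, $M=\gamma$ for SLCS$_\gamma$. On polyhedral models: $x\models p$ iff $x\in V(p)$; $x\models\gamma(\Phi_1,\Phi_2)$ iff some topological path $\pi$ from $x$ has $\pi(1)\models\Phi_2$ and $\pi(r)\models\Phi_1$ for all $r\in(0,1)$; $x\models\eta(\Phi_1,\Phi_2)$ iff the same with $r\in[0,1)$. On poset models $(W,\preceq,\mathcal{V})$: $w\models p$ iff $w\in\mathcal{V}(p)$; $w\models\gamma(\Phi_1,\Phi_2)$ iff some $\pm$-path $\pi$ of length $\ell$ from $w$ has $\pi(\ell)\models\Phi_2$ and $\pi(i)\models\Phi_1$ for $0<i<\ell$; $w\models\eta(\Phi_1,\Phi_2)$ iff the same with $0\le i<\ell$. Negation and conjunction are standard. The encoding $\mathcal{E}$: $\mathcal{E}(p)=p$, $\mathcal{E}(\neg\Phi)=\neg\mathcal{E}(\Phi)$, $\mathcal{E}(\Phi_1\wedge\Phi_2)=\mathcal{E}(\Phi_1)\wedge\mathcal{E}(\Phi_2)$, $\mathcal{E}(\eta(\Phi_1,\Phi_2))=\mathcal{E}(\Phi_1)\wedge\gamma(\mathcal{E}(\Phi_1),\mathcal{E}(\Phi_2))$.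 *)

From HB Require Import structures.
From mathcomp Require Import all_boot all_order all_algebra.
From mathcomp Require Import all_classical all_reals all_analysis.

Set Implicit Arguments.
Unset Strict Implicit.
Unset Printing Implicit Defensive.

Import Order.TTheory GRing.Theory Num.Theory.
Import numFieldNormedType.Exports.
Local Open Scope ring_scope.
Local Open Scope classical_set_scope.

Inductive formE (PL : Type) : Type :=
  | EProp of PL
  | ENeg of formE PL
  | EAnd of formE PL & formE PL
  | EEta of formE PL & formE PL.

Inductive formG (PL : Type) : Type :=
  | GProp of PL
  | GNeg of formG PL
  | GAnd of formG PL & formG PL
  | GGamma of formG PL & formG PL.

Fixpoint enc (PL : Type) (phi : formE PL) : formG PL :=
  match phi with
  | EProp p => GProp p
  | ENeg f => GNeg (enc f)
  | EAnd f g => GAnd (enc f) (enc g)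
  | EEta f g => GAnd (enc f) (GGamma (enc f) (enc g))
  end.

(* pi : nat -> W is a +-path of length l from w (only pi 0 .. pi l matter) *)
Definition pm_path (W : Type) (le : W -> W -> Prop) (w : W) (l : nat)
    (pi : nat -> W) : Prop :=
  [/\ (2 <= l)%N, pi 0%N = w,
      (forall i, (i < l)%N -> le (pi i) (pi i.+1) \/ le (pi i.+1) (pi i)),
      le (pi 0%N) (pi 1%N) & le (pi l) (pi l.-1)].

Fixpoint psatG (PL W : Type) (le : W -> W -> Prop) (val : PL -> W -> Prop)
    (phi : formG PL) (w : W) : Prop :=
  match phi with
  | GProp p => val p w
  | GNeg f => ~ psatG le val f w
  | GAnd f g => psatG le val f w /\ psatG le val g w
  | GGamma f g => exists (l : nat) (pi : nat -> W),
      [/\ pm_path le w l pi, psatG le val g (pi l) &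
          forall i, (0 < i < l)%N -> psatG le val f (pi i)]
  end.

(* P is the polyhedron |K| (carrying the subspace topology of T); a
   topological path from x is a map [0,1] -> P, continuous w.r.t. the
   subspace topology, i.e. continuous into T with image in P. *)
Fixpoint tsatE (R : realType) (T : topologicalType) (PL : Type) (P : set T)
    (V : PL -> set T) (phi : formE PL) (x : T) : Prop :=
  match phi with
  | EProp p => V p x
  | ENeg f => ~ tsatE R P V f x
  | EAnd f g => tsatE R P V f x /\ tsatE R P V g x
  | EEta f g => exists pi : R -> T,
      [/\ {within `[0, 1], continuous (pi : R -> T)},
          (forall r : R, 0 <= r <= 1 -> P (pi r)),
          pi 0 = x,
          tsatE R P V g (pi 1) &
          forall r : R, 0 <= r < 1 -> tsatE R P V f (pi r)]
  end.

(* A complex is given by a finite type Vt of vertex labels, their       *)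
(* positions pos : Vt -> R^m, and the set K of vertex sets of simplices. *)

Section Simplicial.
Variables (R : realType) (m : nat) (Vt : finType) (pos : Vt -> 'rV[R]_m).

Definition simplex (s : {set Vt}) : set 'rV[R]_m :=
  [set x | exists lam : Vt -> R,
     [/\ forall v, v \in s -> 0 <= lam v,
         \sum_(v in s) lam v = 1 &
         x = \sum_(v in s) lam v *: pos v]].

Definition cell (s : {set Vt}) : set 'rV[R]_m :=
  [set x | exists lam : Vt -> R,
     [/\ forall v, v \in s -> 0 < lam v <= 1,
         \sum_(v in s) lam v = 1 &
         x = \sum_(v in s) lam v *: pos v]].

Definition aff_indep (s : {set Vt}) : Prop :=
  forall lam : Vt -> R,
    \sum_(v in s) lam v = 0 ->
    \sum_(v in s) lam v *: pos v = 0 ->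
    forall v, v \in s -> lam v = 0.

Definition is_simplicial_complex (K : {set {set Vt}}) : Prop :=
  [/\
      (forall s, s \in K -> s != finset.set0 /\ aff_indep s),
      (forall s (t : {set Vt}), s \in K -> t \subset s -> t != finset.set0 -> t \in K) &
      (forall s1 s2, s1 \in K -> s2 \in K ->
         simplex s1 `&` simplex s2 = set0 \/
         exists t : {set Vt}, [/\ t \in K, t != finset.set0, t \subset s1, t \subset s2 &
                       simplex s1 `&` simplex s2 = simplex t])].

Definition polyhedron (K : {set {set Vt}}) : set 'rV[R]_m :=
  [set x | exists2 s, s \in K & simplex s x].

Definition polyhedral_valuation (PL : Type) (K : {set {set Vt}})
    (V : PL -> set 'rV[R]_m) : Prop :=
  forall p, exists S : {set {set Vt}},
    S \subset K /\ V p = [set x | exists2 s, s \in S & cell s x].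

(* cells of K, indexed by the simplices of K *)
Definition cellW (K : {set {set Vt}}) := {s : {set Vt} | s \in K}.

Definition cell_le (K : {set {set Vt}}) (s t : cellW K) : Prop :=
  cell (sval s) `<=` closure (cell (sval t)).

Definition cell_val (PL : Type) (K : {set {set Vt}})
    (V : PL -> set 'rV[R]_m) (p : PL) (s : cellW K) : Prop :=
  cell (sval s) `<=` V p.

End Simplicial.

From HB Require Import structures.
From mathcomp Require Import all_boot all_order all_algebra.
From mathcomp Require Import all_classical all_reals all_analysis.
From mathcomp Require Import lra.
Import Order.TTheory GRing.Theory Num.Theory.
Import numFieldNormedType.Exports.
Local Open Scope ring_scope.
Local Open Scope classical_set_scope.

(* Induction on the formula; only [eta] needs an argument, and it rests on
   the fact that the cell order is inclusion of vertex sets, so that the cells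
   above a given cell form an open neighbourhood of it (its open star).
   Forward: along a path, nearby points lie in cells comparable to the current
   one, so by connectedness of [0, 1) the cells met before time 1 are linked
   by a zig-zag of comparable cells satisfying the first argument, ending
   above the cell of the endpoint; a reflexive first step makes it a
   +-path.  Backward: each step of a +-path is realised by a straight segment,
   which lies in the larger of the two cells except at its endpoint in the
   smaller one; since the last step of a +-path goes down, concatenating the
   segments gives a path whose points before time 1 stay in the cells where
   the first argument holds. *)

Set Implicit Arguments.
Unset Strict Implicit.
Unset Printing Implicit Defensive.

Section Segment.
Variables (R : ringType) (V : lmodType R).

Definition segment (x z : V) (r : R) : V := (1 - r) *: x + r *: z.

Lemma segment0 (x z : V) : segment x z 0 = x.
Proof. by rewrite /segment subr0 scale1r scale0r addr0. Qed.

Lemma segment1 (x z : V) : segment x z 1 = z.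
Proof. by rewrite /segment subrr scale0r scale1r add0r. Qed.

Lemma segmentC (x z : V) (r : R) : segment x z r = segment z x (1 - r).
Proof. by rewrite /segment opprB addrCA subrr addr0 addrC. Qed.

End Segment.

Section Barycentric.
Variables (R : realType) (m : nat) (Vt : finType) (pos : Vt -> 'rV[R]_m).

Lemma barycentric_le1 (s : {set Vt}) (lam : Vt -> R) :
  (forall v, v \in s -> 0 <= lam v) -> \sum_(v in s) lam v = 1 ->
  forall v, v \in s -> lam v <= 1.
Proof.
move=> lam_ge0 lam_sum1 v vs; rewrite -lam_sum1 (bigD1 v) //= lerDl.
by apply: sumr_ge0 => i /andP[/lam_ge0].
Qed.

Definition zero_ext (t : {set Vt}) (a : Vt -> R) (v : Vt) : R :=
  if v \in t then a v else 0.

Lemma sum_zero_ext (V : zmodType) (F : Vt -> R -> V) (s t : {set Vt})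
    (a : Vt -> R) :
  (forall v, F v 0 = 0) -> t \subset s ->
  \sum_(v in s) F v (zero_ext t a v) = \sum_(v in t) F v (a v).
Proof.
move=> F0 ts; rewrite (eq_bigr (fun v => if v \in t then F v (a v) else 0)).
  rewrite -big_mkcondr /=; apply: eq_bigl => v.
  by case vt: (v \in t); rewrite ?andbT ?andbF // (fintype.subsetP ts).
by move=> v _; rewrite /zero_ext; case: ifP.
Qed.

Lemma aff_indep_coordE (s : {set Vt}) (a b : Vt -> R) : aff_indep pos s ->
  \sum_(v in s) a v = \sum_(v in s) b v ->
  \sum_(v in s) a v *: pos v = \sum_(v in s) b v *: pos v ->
  forall v, v \in s -> a v = b v.
Proof.
move=> indep sum_ab sumZ_ab v vs; apply/eqP; rewrite -subr_eq0; apply/eqP.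
apply: (indep (fun v => a v - b v)) => //; first by rewrite sumrB sum_ab subrr.
under eq_bigr do rewrite scalerBl.
by rewrite sumrB sumZ_ab subrr.
Qed.

Lemma cell_sub_simplex (s : {set Vt}) : cell pos s `<=` simplex pos s.
Proof. by move=> x [lam [lam01 ? ?]]; exists lam; split=> // v /lam01/andP[/ltW]. Qed.

Lemma cell_nonempty (t : {set Vt}) : t != finset.set0 -> exists x, cell pos t x.
Proof.
move=> t_neq0; have ct : (0 < #|t|)%N by rewrite card_gt0.
exists (\sum_(v in t) #|t|%:R^-1 *: pos v), (fun _ => #|t|%:R^-1); split => //.
  move=> v vt; rewrite invr_gt0 ltr0n ct /= invf_le1 ?ltr0n // ler1n //.
by rewrite sumr_const -[_ *+ _]mulr_natr mulVf // pnatr_eq0 -lt0n.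
Qed.

(* The barycentric coordinates of a point of the open segment are those of
   its endpoints, convexly combined: all of them positive on [t]. *)
Lemma cell_segment (s t : {set Vt}) (x y : 'rV[R]_m) (r : R) :
  s \subset t -> cell pos s x -> cell pos t y -> 0 < r <= 1 ->
  cell pos t (segment x y r).
Proof.
move=> st [a [a01 a1 ->]] [b [b01 b1 ->]] /andP[r0 r1].
pose c v := (1 - r) * zero_ext s a v + r * b v.
have c_gt0 v : v \in t -> 0 < c v.
  move=> vt; rewrite /c ltr_wpDl ?mulr_gt0 ?(andP (b01 v vt)).1 //.
  rewrite mulr_ge0 ?subr_ge0 // /zero_ext.
  by case: ifP => // /a01 /andP[/ltW].
have c1 : \sum_(v in t) c v = 1.
  rewrite big_split /= -!mulr_sumr (sum_zero_ext (F := fun _ c => c)) //.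
  by rewrite a1 b1 !mulr1 subrK.
rewrite /segment; exists c; split => //.
  by move=> v vt; rewrite c_gt0 //= (barycentric_le1 (fun v vt => ltW (c_gt0 v vt)) c1).
rewrite -(sum_zero_ext (F := fun v c => c *: pos v) a (fun=> scale0r _) st).
rewrite !scaler_sumr -big_split /=.
by apply: eq_bigr => v _; rewrite !scalerA -scalerDl.
Qed.

Lemma cell_segment_down (s t : {set Vt}) (x z : 'rV[R]_m) (r : R) :
  s \subset t -> cell pos t x -> cell pos s z -> 0 <= r < 1 ->
  cell pos t (segment x z r).
Proof.
move=> st xt zs /andP[r0 r1]; rewrite segmentC.
by apply: cell_segment st zs xt _; apply/andP; split; lra.
Qed.

End Barycentric.

Lemma continuous_sum (K : numFieldType) (T : topologicalType)
    (W : normedModType K) (I : Type) (r : seq I) (P : pred I)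
    (F : I -> T -> W) :
  (forall i, continuous (F i)) -> continuous (fun x => \sum_(i <- r | P i) F i x).
Proof.
move=> Fc; elim: r => [|i r IH].
  by under eq_fun do rewrite big_nil; exact: cst_continuous.
under eq_fun do rewrite big_cons.
case: (P i) => // x; exact: (continuousD (Fc i x) (IH x)).
Qed.

Section SimplexTopology.
Variables (R : realType) (m : nat) (Vt : finType) (pos : Vt -> 'rV[R]_m).

(* A simplex is the image of the compact set of barycentric coordinate
   vectors (indexed by [enum_rank]) under a continuous map. *)
Lemma simplex_closed (t : {set Vt}) : closed (simplex pos t).
Proof.
pose coord (w : 'rV[R]_#|Vt|) (v : Vt) : R := w ord0 (enum_rank v).
pose G w := \sum_(v in t) coord w v.
pose F w := \sum_(v in t) coord w v *: pos v.
pose Box := [set w : 'rV[R]_#|Vt| | forall i, `[(0:R), 1]%classic (w ord0 i)].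
pose L := Box `&` [set w | G w = 1].
have coord_cont v : continuous (coord ^~ v) by move=> w; exact: coord_continuous.
have cL : compact L.
  apply: compact_closedI.
    by apply: (@rV_compact _ _ (fun=> `[(0:R), 1]%classic)) => i; exact: segment_compact.
  rewrite (_ : [set w | G w = 1] = G @^-1` [set 1]) //.
  apply: preimage_closed; last exact: closed_eq.
  by move=> w _; exact: continuous_sum.
have -> : simplex pos t = F @` L.
  apply/seteqP; split.
  - move=> x [lam [lam_ge0 lam1 ->]].
    exists (\row_i (if enum_val i \in t then lam (enum_val i) else 0)).
      split.
      + move=> i; rewrite mxE /= in_itv /=.
        case: ifP => it; last by rewrite lexx ler01.
        by rewrite lam_ge0 // (barycentric_le1 lam_ge0 lam1).
      + rewrite /G /coord -lam1; apply: eq_bigr => v vt.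
        by rewrite mxE enum_rankK vt.
    by apply: eq_bigr => v vt; rewrite /coord mxE enum_rankK vt.
  - move=> x [w [w01 w1] <-]; exists (coord w); split => //.
    by move=> v _; have /andP[] := w01 (enum_rank v).
apply: compact_closed; first exact: norm_hausdorff.
apply: continuous_compact => //; apply: continuous_subspaceT => w.
apply: continuous_sum => v {}w; apply: continuousZr_tmp; exact: coord_cont.
Qed.

Lemma closure_cell_sub_simplex (t : {set Vt}) : closure (cell pos t) `<=` simplex pos t.
Proof.
rewrite [X in _ `<=` X]((closure_id _).1 (simplex_closed (t:=t))).
exact/closureS/cell_sub_simplex.
Qed.

(* Points of [cell t] on the segment from [x] towards a point of [cell t]
   come arbitrarily close to [x]. *)
Lemma cell_sub_closure (s t : {set Vt}) : t != finset.set0 ->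
  s \subset t -> cell pos s `<=` closure (cell pos t).
Proof.
move=> t_neq0 st x xs B /nbhs_normP [e e0 xeB].
have [y yt] := cell_nonempty pos t_neq0.
set d := `|x - y|.
have de0 : 0 < d + e by rewrite ltr_wpDl ?normr_ge0.
pose r := e / (d + e).
have r0 : 0 < r by rewrite divr_gt0.
have r1 : r <= 1 by rewrite ler_pdivrMr // mul1r lerDr normr_ge0.
exists (segment x y r); split; first by apply: cell_segment st xs yt _; rewrite r0 r1.
apply: xeB; rewrite /ball_ /= /segment.
rewrite (_ : x - _ = r *: (x - y)); last first.
  by rewrite scalerBl scale1r scalerBr opprD opprB addrA addrCA subrr addr0.
rewrite normrZ gtr0_norm // -/d /r mulrAC ltr_pdivrMr // ltr_pM2l //.
by rewrite ltrDl.
Qed.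

End SimplexTopology.

Section Complex.
Variables (R : realType) (m : nat) (Vt : finType) (pos : Vt -> 'rV[R]_m).
Variable K : {set {set Vt}}.
Hypothesis HK : is_simplicial_complex pos K.

(* [x] lies in the common face [u] of [s] and [t]; by affine independence its
   barycentric coordinates with respect to [s] are those with respect to [u],
   extended by zero, and they are positive on [s]. *)
Lemma cell_simplex_subset (s t : {set Vt}) (x : 'rV[R]_m) :
  s \in K -> t \in K -> cell pos s x -> simplex pos t x -> s \subset t.
Proof.
case: HK => [Ksimplex _ Kmeet] sK tK xs xt.
have xst : (simplex pos s `&` simplex pos t) x by split=> //; exact: cell_sub_simplex.
case: (Kmeet s t sK tK) => [st0|[u [_ _ us ut st_u]]]; first by rewrite st0 in xst.
rewrite st_u in xst; case: xst => b [_ b1 xb]; case: xs => a [a01 a1 xa].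
apply: fintype.subset_trans ut; apply/fintype.subsetP => v vs.
have := @aff_indep_coordE _ _ _ pos s a (zero_ext u b) (proj2 (Ksimplex s sK)).
rewrite (sum_zero_ext (F := fun _ c => c)) // (sum_zero_ext (F := fun v c => c *: pos v)) //;
  last by move=> ?; rewrite scale0r.
rewrite -xa -xb a1 b1 /zero_ext => /(_ erefl erefl v vs).
by case: (v \in u) => // av0; have := a01 v vs; rewrite av0 ltxx.
Qed.

Lemma cell_inj (s t : {set Vt}) (x : 'rV[R]_m) :
  s \in K -> t \in K -> cell pos s x -> cell pos t x -> s = t.
Proof.
move=> sK tK xs xt; apply/eqP; rewrite finset.eqEsubset.
rewrite (cell_simplex_subset sK tK xs (cell_sub_simplex xt)).
by rewrite (cell_simplex_subset tK sK xt (cell_sub_simplex xs)).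
Qed.

(* The cell of [x] is spanned by the vertices where its barycentric
   coordinates in an enclosing simplex are nonzero. *)
Lemma polyhedron_cell (x : 'rV[R]_m) :
  polyhedron pos K x -> exists c : cellW K, cell pos (sval c) x.
Proof.
case: HK => [_ Kface _] [t tK [lam [lam_ge0 lam1 xlam]]].
pose s := [set v in t | lam v != 0].
have st : s \subset t by apply/fintype.subsetP => v; rewrite inE => /andP[].
have sum_supp (V : zmodType) (F : Vt -> V) : (forall v, lam v = 0 -> F v = 0) ->
    \sum_(v in t) F v = \sum_(v in s) F v.
  move=> F0; rewrite (big_setID s) /= (finset.setIidPr st) [X in _ + X]big1 ?addr0 //.
  by move=> v; rewrite !inE negb_and negbK => /andP[/orP[/negP//|/eqP/F0]].
have s_neq0 : s != finset.set0.
  apply: contraPneq lam1 => s0; rewrite (sum_supp _ lam) // s0 finset.big_set0.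
  by move/eqP; rewrite eq_sym oner_eq0.
exists (exist _ s (Kface t s tK st s_neq0)), lam; split => /=.
- move=> v; rewrite inE => /andP[vt lam_neq0].
  by rewrite lt_neqAle eq_sym lam_neq0 lam_ge0 // (barycentric_le1 lam_ge0 lam1).
- by rewrite -sum_supp.
- by rewrite xlam; apply: sum_supp => v ->; rewrite scale0r.
Qed.

Lemma cell_leP (c d : cellW K) : cell_le pos c d <-> sval c \subset sval d.
Proof.
have [Ksimplex _ _] := HK; case: c => s sK; case: d => t tK /=; split.
  move=> st; have [x xs] := cell_nonempty pos (proj1 (Ksimplex s sK)).
  exact: cell_simplex_subset sK tK xs (closure_cell_sub_simplex (st x xs)).
exact: cell_sub_closure (proj1 (Ksimplex t tK)).
Qed.

(* The simplices not containing [s] form a closed set avoiding [x]. *)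
Lemma cell_star_nbhs (s : {set Vt}) (x : 'rV[R]_m) : s \in K -> cell pos s x ->
  exists2 e : R, 0 < e & forall y t, `|x - y| < e -> t \in K -> cell pos t y ->
    s \subset t.
Proof.
move=> sK xs.
pose U := \big[setU/set0]_(t <- enum [set t in K | ~~ (s \subset t)]) simplex pos t.
have U_closed : closed U by apply: closed_bigsetU => t _; exact: simplex_closed.
have Ux : (~` U) x.
  rewrite /U -bigcup_seq => -[t] /=; rewrite mem_enum inE => /andP[tK /negP + xt].
  by apply; exact: cell_simplex_subset sK tK xs xt.
have /nbhs_normP [e e0 xeU] : nbhs x (~` U).
  by apply: open_nbhs_nbhs; split=> //; rewrite openC.
exists e => // y t xy tK yt; apply/negPn/negP => st; apply: (xeU y xy).
rewrite /U -bigcup_seq; exists t => /=; first by rewrite mem_enum inE tK.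
exact: cell_sub_simplex.
Qed.

Lemma cell_valP (PL : Type) (V : PL -> set 'rV[R]_m) (p : PL) (c : cellW K)
    (x : 'rV[R]_m) :
  polyhedral_valuation pos K V -> cell pos (sval c) x ->
  V p x <-> cell_val pos V p c.
Proof.
move=> HV xc; rewrite /cell_val; split=> [|cV]; last exact: cV.
have [S [SK ->]] := HV p; case=> s sS xs y yc; exists s => //.
by rewrite (cell_inj (fintype.subsetP SK _ sS) (valP c) xs xc).
Qed.

End Complex.

Section Paths.
Variables (R : realType) (W : normedModType R).

Lemma within_continuousP (A : set R) (f : R -> W) :
  {within A, continuous f} <->
  (forall t, A t -> forall e : R, 0 < e -> exists2 d : R, 0 < d &
     forall u, A u -> `|t - u| < d -> `|f t - f u| < e).
Proof.
rewrite subspace_continuousP; split.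
  move=> f_cont t At e e0; have /cvgrPdist_lt /(_ e e0) := f_cont t At.
  rewrite near_withinE => /nbhs_normP [d d0 tdf]; exists d => // u Au tu.
  exact: tdf.
move=> f_cont t At; apply/cvgrPdist_lt => e e0; rewrite near_withinE.
have [d d0 tdf] := f_cont t At e e0; apply/nbhs_normP; exists d => // u tu Au.
exact: tdf.
Qed.

Lemma within_continuous_affine (A : set R) (f g : R -> W) (a b : R) : 0 < a ->
  (forall t, A t -> 0 <= a * t + b <= 1) ->
  (forall t, A t -> g t = f (a * t + b)) ->
  {within `[0, 1], continuous f} -> {within A, continuous g}.
Proof.
move=> a0 A01 gE /within_continuousP f_cont; apply/within_continuousP => t At e e0.
have [|d d0 tdf] := f_cont (a * t + b) _ e e0; first by rewrite /= in_itv A01.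
exists (d / a) => [|u Au tu]; first by rewrite divr_gt0.
rewrite !gE //; apply: tdf; first by rewrite /= in_itv A01.
by rewrite opprD addrACA subrr addr0 -mulrBr normrM gtr0_norm // mulrC -ltr_pdivlMr.
Qed.

Lemma segment_continuous (x z : W) : continuous (segment x z).
Proof.
rewrite (_ : segment x z = (fun r => (1 - r) *: x) \+ (fun r => r *: z)) //.
move=> r; apply: continuousD; apply: continuousZr_tmp; last exact: cvg_id.
by apply: continuousB; [exact: cvg_cst | exact: cvg_id].
Qed.

Definition reach (P Q : set W) (x z : W) : Prop :=
  exists pi : R -> W,
    [/\ {within `[0, 1], continuous pi},
        (forall r : R, 0 <= r <= 1 -> P (pi r)),
        pi 0 = x, pi 1 = z &
        forall r : R, 0 <= r < 1 -> Q (pi r)].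

Lemma reach_trans (P Q : set W) (x y z : W) :
  reach P Q x y -> reach P Q y z -> reach P Q x z.
Proof.
have itv01_split : `[(0:R), 1] = `[0, 2^-1] `|` `[2^-1, 1].
  apply/seteqP; split=> t /=; rewrite !in_itv /=; last first.
    by case=> /andP[t0 t1]; apply/andP; split; lra.
  move=> /andP[t0 t1]; case: (lerP t 2^-1) => ?; [left|right];
    by apply/andP; split; lra.
move=> [f [f_cont fP f0 f1 fQ]] [g [g_cont gP g0 g1 gQ]].
pose h r := if r <= 2^-1 then f (2 * r) else g (2 * r - 1).
have hf r : r <= 2^-1 -> h r = f (2 * r + 0) by rewrite /h addr0 => ->.
have hg r : 2^-1 <= r -> h r = g (2 * r + -1).
  rewrite /h; case: ifP => // r_le r_ge.
  by rewrite (_ : 2 * r = 1) ?subrr ?f1 ?g0 //; lra.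
exists h; split.
- rewrite itv01_split.
  apply: withinU_continuous; [exact: itv_closed | exact: itv_closed | |].
  + apply: (within_continuous_affine (A := `[0, 2^-1]) (a := 2) (b := 0) _ _ _ f_cont) => // t;
      rewrite /= in_itv /= => /andP[t0 t1]; last exact: hf.
    by apply/andP; split; lra.
  + apply: (within_continuous_affine (A := `[2^-1, 1]) (a := 2) (b := -1) _ _ _ g_cont) => // t;
      rewrite /= in_itv /= => /andP[t0 t1]; last exact: hg.
    by apply/andP; split; lra.
- move=> r /andP[r0 r1]; case: (lerP r 2^-1) => r_half.
    by rewrite hf // addr0; apply: fP; apply/andP; split; lra.
  by rewrite hg ?ltW //; apply: gP; apply/andP; split; lra.
- by rewrite hf ?mulr0 ?addr0 // invr_ge0 ler0n.
- by rewrite hg; [rewrite (_ : 2 * 1 + -1 = 1 :> R) //; lra | lra].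
- move=> r /andP[r0 r1]; case: (lerP r 2^-1) => r_half.
    rewrite hf // addr0; have [r_lt|r_eq] := ltrP (2 * r) 1.
      by apply: fQ; apply/andP; split; lra.
    by rewrite (_ : 2 * r = 1) ?f1 -?g0; [apply: gQ; rewrite lexx ltr01 | lra].
  by rewrite hg ?ltW //; apply: gQ; apply/andP; split; lra.
Qed.

Lemma reach_chain (P Q : set W) (y : nat -> W) (l : nat) :
  (0 < l)%N -> (forall j, (j < l)%N -> reach P Q (y j) (y j.+1)) ->
  reach P Q (y 0%N) (y l).
Proof.
elim: l => [//|[|l] IH] _ step; first exact: step.
apply: reach_trans (step _ (ltnSn _)); apply: IH => // j jl.
by apply: step; rewrite ltnS ltnW.
Qed.

End Paths.

Lemma connected_locally_constant (R : realType) (C A : set R) :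
  connected C -> (exists t, C t /\ A t) ->
  (forall t, C t -> exists2 d : R, 0 < d &
     forall u, C u -> `|t - u| < d -> (A t <-> A u)) ->
  C `<=` A.
Proof.
move=> C_conn [t0 [Ct0 At0]] A_loc.
have /choice [d dP] : forall t, exists d : R, C t -> 0 < d /\
    forall u, C u -> `|t - u| < d -> (A t <-> A u).
  move=> t; have [Ct|nCt] := pselect (C t); last by exists 1 => /nCt.
  by have [d d0 dP] := A_loc t Ct; exists d.
have ballE t r u : ball t r u <-> `|t - u| < r by rewrite -ball_normE.
have ball_d t : C t -> ball t (d t) t.
  by move=> /dP[d0 _]; apply/ballE; rewrite subrr normr0.
suff AC_C : A `&` C = C by move=> t; rewrite -AC_C => -[].
apply: C_conn; first by exists t0.
- exists (\bigcup_(t in A `&` C) ball t (d t)).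
    by apply: bigcup_open => t _; exact: ball_open.
  apply/seteqP; split=> [u [Au Cu]|u [Cu [t [At Ct] /ballE tu]]].
    by split=> //; exists u => //; exact: ball_d.
  by split=> //; apply/((dP t Ct).2 u Cu tu).
- exists (~` \bigcup_(t in C `\` A) ball t (d t)).
    by rewrite closedC; apply: bigcup_open => t _; exact: ball_open.
  apply/seteqP; split=> [u [Au Cu]|u [Cu uU]].
    split=> // -[t [Ct nAt] /ballE tu]; apply: nAt.
    exact/((dP t Ct).2 u Cu tu).
  split=> //; apply: contrapT => nAu; apply: uU.
  by exists u => //; exact: ball_d.
Qed.

Section SimplicialPaths.
Variables (R : realType) (m : nat) (Vt : finType) (pos : Vt -> 'rV[R]_m).
Variable K : {set {set Vt}}.
Hypothesis HK : is_simplicial_complex pos K.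

Lemma cell_polyhedron (s : {set Vt}) : s \in K -> cell pos s `<=` polyhedron pos K.
Proof. by move=> sK x xs; exists s => //; exact: cell_sub_simplex. Qed.

Lemma reach_segment_up (Q : set 'rV[R]_m) (a b : {set Vt}) (x z : 'rV[R]_m) :
  a \in K -> b \in K -> a \subset b -> cell pos a x -> cell pos b z ->
  Q x -> (forall y, cell pos b y -> Q y) -> reach (polyhedron pos K) Q x z.
Proof.
move=> aK bK ab xa zb Qx Qb.
have seg_b r : 0 < r <= 1 -> cell pos b (segment x z r).
  exact: cell_segment ab xa zb.
exists (segment x z); split; rewrite ?segment0 ?segment1 //.
- exact/continuous_subspaceT/segment_continuous.
- move=> r /andP[r0 r1]; have [->|r_neq0] := eqVneq r 0.
    by rewrite segment0; exact: cell_polyhedron xa.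
  by apply: cell_polyhedron bK _ (seg_b r _); rewrite lt0r r_neq0 r0.
- move=> r /andP[r0 r1]; have [->|r_neq0] := eqVneq r 0; first by rewrite segment0.
  by apply/Qb/seg_b; rewrite lt0r r_neq0 r0 ltW.
Qed.

Lemma reach_segment_down (Q : set 'rV[R]_m) (a b : {set Vt}) (x z : 'rV[R]_m) :
  a \in K -> b \in K -> b \subset a -> cell pos a x -> cell pos b z ->
  (forall y, cell pos a y -> Q y) -> reach (polyhedron pos K) Q x z.
Proof.
move=> aK bK ba xa zb Qa.
have seg_a r : 0 <= r < 1 -> cell pos a (segment x z r).
  exact: cell_segment_down ba xa zb.
exists (segment x z); split; rewrite ?segment0 ?segment1 //.
- exact/continuous_subspaceT/segment_continuous.
- move=> r /andP[r0 r1]; have [->|r_neq1] := eqVneq r 1.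
    by rewrite segment1; exact: cell_polyhedron zb.
  by apply: cell_polyhedron aK _ (seg_a r _); rewrite r0 lt_neqAle r_neq1.
- by move=> r /seg_a /Qa.
Qed.

(* Continuity of [pi] at [t] keeps [pi u] inside the open star of the cell of
   [pi t] for [u] near [t]. *)
Lemma path_cell_le_near (pi : R -> 'rV[R]_m) (t : R) :
  {within `[0, 1], continuous pi} -> 0 <= t <= 1 -> polyhedron pos K (pi t) ->
  exists2 d : R, 0 < d & forall u (c0 c : cellW K), 0 <= u <= 1 -> `|t - u| < d ->
    cell pos (sval c0) (pi t) -> cell pos (sval c) (pi u) -> cell_le pos c0 c.
Proof.
move=> pi_cont t01 /(polyhedron_cell HK) [c' c't].
have [e e0 c'_star] := cell_star_nbhs HK (valP c') c't.
have [|d d0 pi_near] := (within_continuousP _ _).1 pi_cont t _ e e0.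
  by rewrite /= in_itv.
exists d => // u c0 c u01 tu c0t cu; apply/(cell_leP HK).
rewrite (cell_inj HK (valP c0) (valP c') c0t c't).
by apply: c'_star (pi u) _ _ (valP c) cu; apply: pi_near; rewrite /= ?in_itv.
Qed.

End SimplicialPaths.

Section Zigzag.
Variables (W : Type) (le : W -> W -> Prop).

Definition zigzag (F : W -> Prop) (s c : W) : Prop :=
  exists l (p : nat -> W), [/\ p 0%N = s, p l = c,
    (forall i, (i < l)%N -> le (p i) (p i.+1) \/ le (p i.+1) (p i)) &
    (forall i, (i <= l)%N -> F (p i))].

Lemma zigzag_refl (F : W -> Prop) (s : W) : F s -> zigzag F s s.
Proof. by move=> Fs; exists 0%N, (fun=> s); split=> // i; rewrite ltn0. Qed.

Lemma zigzag_rcons (F : W -> Prop) (s c c' : W) :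
  zigzag F s c -> le c c' \/ le c' c -> F c' -> zigzag F s c'.
Proof.
move=> [l [p [p0 pl p_cmp pF]]] cc' Fc'.
exists l.+1, (fun i => if (i <= l)%N then p i else c'); split => //.
- by rewrite ltnn.
- move=> i; rewrite ltnS => il; case: ltngtP il => // [il _|-> _].
    exact: p_cmp.
  by rewrite pl.
- by move=> i _; case: ifP => [/pF|_].
Qed.

Hypothesis le_reflexive : forall w, le w w.

(* Prepend a reflexive step so that the first step goes up, and end by going
   down to [c1]. *)
Lemma zigzag_pm_path (F G : W -> Prop) (s c c1 : W) :
  zigzag F s c -> le c1 c -> G c1 ->
  exists l (pi : nat -> W),
    [/\ pm_path le s l pi, G (pi l) & forall i, (0 < i < l)%N -> F (pi i)].
Proof.
move=> [l [p [p0 pl p_cmp pF]]] c1c Gc1.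
pose q i := if i == 0%N then s else if (i <= l.+1)%N then p i.-1 else c1.
exists l.+2, q; split.
- split=> //; rewrite /q /= ?ltnn ?leqnn ?pl -?p0 //.
  case=> [_|i]; first by left.
  rewrite !ltnS => il; case: ltngtP il => // [il _|-> _]; last by rewrite pl; right.
  exact: p_cmp.
- by rewrite /q /= ltnn.
- by case=> // i /andP[_]; rewrite /q /= !ltnS => il; rewrite il; apply: pF.
Qed.

End Zigzag.

Section EtaModality.
Variables (R : realType) (m : nat) (Vt : finType) (pos : Vt -> 'rV[R]_m).
Variable K : {set {set Vt}}.
Hypothesis HK : is_simplicial_complex pos K.

Local Notation cle := (@cell_le R m Vt pos K).

Lemma cell_le_refl (c : cellW K) : cle c c.
Proof. exact: subset_closure. Qed.

Lemma pm_path_reach (Q : set 'rV[R]_m) (s : cellW K) (x : 'rV[R]_m) (l : nat)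
    (pi : nat -> cellW K) :
  cell pos (sval s) x -> pm_path cle s l pi ->
  (forall i, (i < l)%N -> cell pos (sval (pi i)) `<=` Q) ->
  exists2 z, cell pos (sval (pi l)) z & reach (polyhedron pos K) Q x z.
Proof.
move=> xs [l2 pi0 pi_cmp _ pi_last] piQ; have [Ksimplex _ _] := HK.
have /choice [y yP] : forall i, exists y, cell pos (sval (pi i)) y /\ (i = 0%N -> y = x).
  case=> [|i]; first by exists x; rewrite pi0.
  have [z zc] := cell_nonempty pos (proj1 (Ksimplex _ (valP (pi i.+1)))).
  by exists z.
exists (y l); first exact: (yP l).1.
rewrite -(yP 0%N).2 //; apply: reach_chain; first exact: leq_trans l2.
move=> j jl; have [yj _] := yP j; have [yj1 _] := yP j.+1.
have [down|not_down] := boolP (sval (pi j.+1) \subset sval (pi j)).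
  exact: reach_segment_down (valP (pi j)) (valP (pi j.+1)) down yj yj1 (piQ j jl).
have up : sval (pi j) \subset sval (pi j.+1).
  by case: (pi_cmp j jl) => /(cell_leP HK) // down; rewrite down in not_down.
have j1l : (j.+1 < l)%N.
  rewrite ltn_neqAle jl andbT; apply: contraNneq not_down => j1l.
  by move: pi_last; rewrite -j1l => /(cell_leP HK).
exact: reach_segment_up (valP (pi j)) (valP (pi j.+1)) up yj yj1
  (piQ j jl _ yj) (piQ _ j1l).
Qed.

Section Formulas.
Variables (Qf Qg : set 'rV[R]_m) (Pf Pg : cellW K -> Prop).
Hypothesis QPf : forall y (c : cellW K), cell pos (sval c) y -> Qf y <-> Pf c.
Hypothesis QPg : forall y (c : cellW K), cell pos (sval c) y -> Qg y <-> Pg c.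

Lemma path_zigzag (p : R -> 'rV[R]_m) (s : cellW K) :
  {within `[0, 1], continuous p} ->
  (forall r, 0 <= r <= 1 -> polyhedron pos K (p r)) ->
  cell pos (sval s) (p 0) -> (forall r, 0 <= r < 1 -> Qf (p r)) ->
  forall t, 0 <= t < 1 ->
    exists2 c : cellW K, cell pos (sval c) (p t) & zigzag cle Pf s c.
Proof.
move=> p_cont pP p0s pQf.
have co01_cc01 (r : R) : 0 <= r < 1 -> 0 <= r <= 1 by case/andP=> -> /ltW.
apply: connected_locally_constant.
- apply/connected_intervalP => a b /andP[a0 a1] /andP[b0 b1] t /andP[at_ tb].
  by apply/andP; split; lra.
- exists 0; split; first by rewrite lexx ltr01.
  by exists s => //; apply/zigzag_refl/(QPf p0s)/pQf; rewrite lexx ltr01.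
move=> t t01; have t01' := co01_cc01 t t01.
have [d d0 near_t] := path_cell_le_near HK p_cont t01' (pP t t01').
exists d => // u u01 tu; have u01' := co01_cc01 u u01.
have [ct ctt] := polyhedron_cell HK (pP t t01').
have [cu cuu] := polyhedron_cell HK (pP u u01').
split=> -[c cc zz].
  exists cu => //; apply: zigzag_rcons zz _ _; first by left; exact: near_t cc cuu.
  exact/(QPf cuu)/pQf.
exists ct => //; apply: zigzag_rcons zz _ _; first by right; exact: near_t ctt cc.
exact/(QPf ctt)/pQf.
Qed.

Lemma eta_pm_path (x : 'rV[R]_m) (s : cellW K) : cell pos (sval s) x ->
  (exists pi : R -> 'rV[R]_m,
     [/\ {within `[0, 1], continuous pi},
         (forall r : R, 0 <= r <= 1 -> polyhedron pos K (pi r)),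
         pi 0 = x, Qg (pi 1) & forall r : R, 0 <= r < 1 -> Qf (pi r)]) ->
  Pf s /\ exists l (pi : nat -> cellW K),
    [/\ pm_path cle s l pi, Pg (pi l) & forall i, (0 < i < l)%N -> Pf (pi i)].
Proof.
move=> xs [p [p_cont pP p0 pQg pQf]]; rewrite -p0 in xs.
split; first by apply/(QPf xs)/pQf; rewrite lexx ltr01.
have p01 : 0 <= (1:R) <= 1 by rewrite ler01 lexx.
have [d d0 near_1] := path_cell_le_near HK p_cont p01 (pP 1 p01).
have [u u01 u1] : exists2 u : R, 0 <= u < 1 & `|1 - u| < d.
  have [d_le1|d_gt1] := lerP d 1.
    by exists (1 - d / 2); [apply/andP; split | rewrite ger0_norm]; lra.
  by exists 2^-1; [apply/andP; split | rewrite ger0_norm]; lra.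
have [cu cuu zz] := path_zigzag p_cont pP xs pQf u01.
have [c1 c11] := polyhedron_cell HK (pP 1 p01).
apply: (zigzag_pm_path cell_le_refl zz).
  by apply: near_1 u1 c11 cuu; case/andP: u01 => -> /ltW.
exact/(QPg c11).
Qed.

Lemma pm_path_eta (x : 'rV[R]_m) (s : cellW K) : cell pos (sval s) x ->
  Pf s -> (exists l (pi : nat -> cellW K),
    [/\ pm_path cle s l pi, Pg (pi l) & forall i, (0 < i < l)%N -> Pf (pi i)]) ->
  exists pi : R -> 'rV[R]_m,
     [/\ {within `[0, 1], continuous pi},
         (forall r : R, 0 <= r <= 1 -> polyhedron pos K (pi r)),
         pi 0 = x, Qg (pi 1) & forall r : R, 0 <= r < 1 -> Qf (pi r)].
Proof.
move=> xs Pfs [l [pi [pi_path piPg piPf]]].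
have piQf i : (i < l)%N -> cell pos (sval (pi i)) `<=` Qf.
  move=> il y yc; apply/(QPf yc); case: i il yc => [|i] il yc.
    by case: pi_path => _ ->.
  exact: piPf.
have [z zc [q [q_cont qP q0 q1 qQf]]] := pm_path_reach xs pi_path piQf.
by exists q; split=> //; rewrite q1; apply/(QPg zc).
Qed.

End Formulas.

Lemma tsatE_psatG (PL : Type) (V : PL -> set 'rV[R]_m) (phi : formE PL) :
  polyhedral_valuation pos K V ->
  forall (x : 'rV[R]_m) (s : cellW K), cell pos (sval s) x ->
    tsatE R (polyhedron pos K) V phi x <-> psatG cle (cell_val pos V) (enc phi) s.
Proof.
move=> HV; elim: phi => [p|f IHf|f IHf g IHg|f IHf g IHg] x s xs /=.
- exact: cell_valP.
- by rewrite (IHf x s xs).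
- by rewrite (IHf x s xs) (IHg x s xs).
- split; first exact: eta_pm_path IHf IHg x s xs.
  by case; exact: pm_path_eta IHf IHg x s xs.
Qed.

End EtaModality.

Theorem lemma4 (R : realType) (m : nat) (PL : Type) (Vt : finType)
    (pos : Vt -> 'rV[R]_m) (K : {set {set Vt}}) (V : PL -> set 'rV[R]_m) :
  is_simplicial_complex pos K ->
  polyhedral_valuation pos K V ->
  forall (x : 'rV[R]_m), polyhedron pos K x ->
  forall (s : cellW K), cell pos (sval s) x ->
  forall phi : formE PL,
    tsatE R (polyhedron pos K) V phi x <->
    psatG (@cell_le R m Vt pos K) (cell_val pos V) (enc phi) s.
Proof. by move=> HK HV x _ s xs phi; exact: tsatE_psatG. Qed.
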